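(* Let $B\in\mathbb{R}^{n\times n}$ be symmetric, partitioned into $p\times p$ blocks $B_{st}\in\mathbb{R}^{n_s\times n_t}$, and let $\check B$ be its strictly block lower triangular part ($\check B_{st}=B_{st}$ if $s>t$, $0$ otherwise). If $\lambda_{\min}(B)<0$, then for every $\beta\in(0,\frac1{\rho(B)})$ the matrix $(I_n+\beta\check B)^{-1}B$ has at least one eigenvalue in $$\Omega=\{a+bi:\ a,b\in\mathbb{R},\ a\le 0,\ (a,b)\ne(0,0)\}.$$
   Context: $n_1,\dots,n_p$ are positive integers with $\sum_sn_s=n$; $\rho(B)$ denotes the spectral radius of $B$ and $\lambda_{\min}(B)$ its smallest eigenvalue. *)

From HB Require Import structures.
From mathcomp Require Import all_boot all_order all_algebra.
From mathcomp Require Import complex.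
Set Implicit Arguments. Unset Strict Implicit. Unset Printing Implicit Defensive.
Import Order.TTheory GRing.Theory Num.Theory.
Local Open Scope ring_scope.

Definition cmx (R : rcfType) (m n : nat) (A : 'M[R]_(m, n)) : 'M[R[i]]_(m, n) :=
  map_mx (fun x : R => Complex x 0) A.

Definition ceigen (R : rcfType) (n : nat) (A : 'M[R]_n) (a b : R) : bool :=
  eigenvalue (cmx A) (Complex a b).

Definition is_spectral_radius (R : rcfType) (n : nat) (A : 'M[R]_n) (r : R) : Prop :=
  (exists a b : R, ceigen A a b /\ r = Num.sqrt (a ^+ 2 + b ^+ 2)) /\
  (forall a b : R, ceigen A a b -> Num.sqrt (a ^+ 2 + b ^+ 2) <= r).

(* l is the smallest eigenvalue of A (used for symmetric A, whose eigenvalues are real). *)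
Definition is_lambda_min (R : rcfType) (n : nat) (A : 'M[R]_n) (l : R) : Prop :=
  eigenvalue A l /\ (forall m : R, eigenvalue A m -> l <= m).

Definition block_strict_lower (R : pzRingType) (p : nat) (ns : 'I_p -> nat)
    (B : 'M[R]_(\sum_(s < p) ns s)) : 'M[R]_(\sum_(s < p) ns s) :=
  \mxblock_(s < p, t < p) (if (t < s)%N then submxblock B s t else 0).

From HB Require Import structures.
From mathcomp Require Import all_boot all_order all_algebra.
From mathcomp Require Import complex spectral.
From mathcomp Require Import ring.
Set Implicit Arguments. Unset Strict Implicit. Unset Printing Implicit Defensive.
Import Order.TTheory GRing.Theory Num.Theory.
Local Open Scope ring_scope.
Local Open Scope sesquilinear_scope.

(* Put A := 1 + beta L, where L is the strictly block lower part of B, so that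
   M := A^-1 B satisfies A M = B.  Since 2 Re (x L x^* ) = x B x^* - x D x^*
   with D the block diagonal part of B, and both forms are bounded by
   rho(B) |x|^2, the Hermitian part of A is positive definite when
   beta rho(B) < 1.  Triangularize M = S T S^* with S unitary and T upper
   triangular: the Hermitian matrix S^* B S then factors as (S^* A S) T.
   If no eigenvalue of M, i.e. no diagonal entry of T, lies in Omega, each of
   them is 0 or has positive real part, and an induction on the size through
   Schur complements shows that such a product is positive semidefinite;
   this contradicts lambda_min(B) < 0. *)

Lemma corner_submxK (V : nmodType) k (A : 'M[V]_(1 + k)) :
  block_mx (A 0 0)%:M (ursubmx A) (dlsubmx A) (drsubmx A) = A.
Proof.
rewrite -[RHS]submxK [ulsubmx A]mx11_scalar !mxE.
by congr (block_mx _%:M _ _ _); congr (A _ _); apply: val_inj.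
Qed.

Lemma char_poly_trmx (F : fieldType) n (A : 'M[F]_n) : char_poly A^T = char_poly A.
Proof.
rewrite /char_poly -det_tr; congr (\det _); apply/matrixP => i j.
by rewrite !mxE eq_sym.
Qed.

Lemma eigenvalue_trmx (F : fieldType) n (A : 'M[F]_n) a :
  eigenvalue A^T a = eigenvalue A a.
Proof. by rewrite !eigenvalue_root_char char_poly_trmx. Qed.

Section BlockParts.
Variables (V : pzRingType) (p : nat) (ns : 'I_p -> nat).
Local Notation n := (\sum_(s < p) ns s).

Lemma mxblock_submxblock_ifE (P : rel 'I_p) (B : 'M[V]_n) i j :
  (\mxblock_(s < p, t < p) (if P s t then submxblock B s t else 0)) i j =
  if P (tagnat.sig1 i) (tagnat.sig1 j) then B i j else 0.
Proof. by rewrite mxE; case: ifP => _; rewrite mxE // !tagnat.sig2K. Qed.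

Definition block_diag_part (B : 'M[V]_n) : 'M[V]_n :=
  \mxblock_(s < p, t < p) (if s == t then submxblock B s t else 0).

Definition row_block_part (s : 'I_p) (x : 'rV[V]_n) : 'rV[V]_n :=
  \row_i (if tagnat.sig1 i == s then x 0 i else 0).

Lemma block_strict_lowerE (B : 'M[V]_n) i j : block_strict_lower B i j =
  if (tagnat.sig1 j < tagnat.sig1 i)%N then B i j else 0.
Proof. exact: (mxblock_submxblock_ifE (fun s t => t < s)%N). Qed.

Lemma block_diag_partE (B : 'M[V]_n) i j : block_diag_part B i j =
  if tagnat.sig1 i == tagnat.sig1 j then B i j else 0.
Proof. exact: mxblock_submxblock_ifE. Qed.

Lemma block_diag_part1 : block_diag_part 1%:M = 1%:M.
Proof.
apply/matrixP => i j; rewrite block_diag_partE mxE.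
by have [<-|_] := eqVneq i j; rewrite ?eqxx ?if_same.
Qed.

End BlockParts.

Lemma map_block_strict_lower (V W : pzRingType) p (ns : 'I_p -> nat)
    (f : {additive V -> W}) (B : 'M[V]_(\sum_(s < p) ns s)) :
  map_mx f (block_strict_lower B) = block_strict_lower (map_mx f B).
Proof.
apply/matrixP => i j; rewrite mxE !block_strict_lowerE mxE.
by case: ifP; rewrite ?raddf0.
Qed.

Section HermitianForm.
Variable C : numClosedFieldType.

Definition qform n (A : 'M[C]_n) (x : 'rV[C]_n) : C := (x *m A *m x ^t*) 0 0.

Definition Re_posdef n (G : 'M[C]_n) := forall x, x != 0 -> 0 < 'Re (qform G x).

Lemma trmxC_mul m n p (A : 'M[C]_(m, n)) (B : 'M[C]_(n, p)) :
  (A *m B) ^t* = B ^t* *m A ^t*.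
Proof. by rewrite trmx_mul map_mxM. Qed.

Lemma trmxC11 (M : 'M[C]_1) : M ^t* 0 0 = (M 0 0)^*.
Proof. by rewrite !mxE. Qed.

Lemma qformD n (A B : 'M[C]_n) x : qform (A + B) x = qform A x + qform B x.
Proof. by rewrite /qform mulmxDr mulmxDl mxE. Qed.

Lemma qformB n (A B : 'M[C]_n) x : qform (A - B) x = qform A x - qform B x.
Proof. by rewrite /qform mulmxBr mulmxBl [LHS]mxE [X in _ + X]mxE. Qed.

Lemma qformZ n a (A : 'M[C]_n) x : qform (a *: A) x = a * qform A x.
Proof. by rewrite /qform -scalemxAr -scalemxAl mxE. Qed.

Lemma qform0 n (A : 'M[C]_n) : qform A 0 = 0.
Proof. by rewrite /qform !mul0mx mxE. Qed.

Lemma conj_qform n (A : 'M[C]_n) x : (qform A x)^* = qform (A ^t*) x.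
Proof. by rewrite /qform -trmxC11 !trmxC_mul trmxCK mulmxA. Qed.

Lemma qform_rank1 n (c : 'cV[C]_n) (r : 'rV[C]_n) x :
  qform (c *m r) x = (x *m c) 0 0 * (r *m x ^t*) 0 0.
Proof. by rewrite /qform !mulmxA -[x *m c *m r *m _]mulmxA mxE big_ord1. Qed.

Lemma qform_congr m n (S : 'M[C]_(m, n)) (A : 'M[C]_m) x :
  qform (S ^t* *m A *m S) x = qform A (x *m S ^t*).
Proof. by rewrite /qform trmxC_mul trmxCK !mulmxA. Qed.

Lemma qformE n (A : 'M[C]_n) x : qform A x = \sum_i \sum_j x 0 i * A i j * (x 0 j)^*.
Proof.
rewrite /qform mxE exchange_big; apply: eq_bigr => j _.
by rewrite mxE big_distrl; apply: eq_bigr => i _; rewrite !mxE.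
Qed.

Lemma qform_diag n (d : 'rV[C]_n) x :
  qform (diag_mx d) x = \sum_i d 0 i * (x 0 i * (x 0 i)^*).
Proof.
rewrite /qform mxE; apply: eq_bigr => i _.
by rewrite mul_mx_diag !mxE mulrCA mulrA.
Qed.

Lemma qform1 n (x : 'rV[C]_n) : qform 1%:M x = dotmx x x.
Proof. by rewrite /qform mulmx1 dotmxE. Qed.

Lemma qform1_gt0 n (x : 'rV[C]_n) : x != 0 -> 0 < qform 1%:M x.
Proof. by rewrite qform1 dnorm_gt0. Qed.

Lemma qform_eigenvector n (A : 'M[C]_n) a v : v *m A = a *: v ->
  qform A v = a * qform 1%:M v.
Proof. by move=> vA; rewrite /qform vA mulmx1 -scalemxAl mxE. Qed.

Lemma Re_posdef_congr n (S A : 'M[C]_n) : S \in unitmx -> Re_posdef A ->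
  Re_posdef (S ^t* *m A *m S).
Proof.
move=> S_unit A_pos x x_neq0; rewrite qform_congr; apply: A_pos.
by rewrite mulmx_free_eq0 // row_free_unit map_unitmx unitmx_tr.
Qed.

Lemma Re_posdef_unitmx n (G : 'M[C]_n) : Re_posdef G -> G \in unitmx.
Proof.
move=> G_pos; rewrite unitmxE unitfE; apply/negP => /det0P [v v_neq0 vG0].
by have := G_pos v v_neq0; rewrite /qform vG0 mul0mx mxE raddf0 ltxx.
Qed.

Lemma qform_block k (a u : C) (r v : 'rV[C]_k) (c : 'cV[C]_k) (D : 'M[C]_k) :
  qform (block_mx a%:M r c D) (row_mx u%:M v) =
  u * a * u^* + (v *m c) 0 0 * u^* + u * (r *m v ^t*) 0 0 + qform D v.
Proof.
rewrite /qform tr_row_mx map_col_mx tr_scalar_mx map_scalar_mx /=.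
rewrite mul_row_block mul_row_col !mulmxDl -!scalar_mxM !mul_scalar_mx !mul_mx_scalar.
rewrite -scalemxAl !mxE eqxx !mulr1n -!addrA; congr (_ + _); rewrite mulrC.
by congr (_ + _); rewrite addrC mulrC.
Qed.

Lemma hermitian_block k (a : C) (r : 'rV[C]_k) (c : 'cV[C]_k) (D : 'M[C]_k) :
  (block_mx a%:M r c D) ^t* = block_mx a%:M r c D ->
  [/\ a^* = a, r = c ^t* & D ^t* = D].
Proof.
rewrite tr_block_mx map_block_mx tr_scalar_mx map_scalar_mx.
by case/eq_block_mx => /(congr1 (fun M : 'M_1 => M 0 0)); rewrite !mxE eqxx !mulr1n.
Qed.

Lemma Re_posdef_block k (g : C) (r : 'rV[C]_k) (c : 'cV[C]_k) (G : 'M[C]_k) :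
  Re_posdef (block_mx g%:M r c G) -> 0 < 'Re g /\ Re_posdef (G - g^-1 *: (c *m r)).
Proof.
move=> G_pos; have g_pos : 0 < 'Re g.
  have := G_pos (row_mx 1%:M 0).
  rewrite qform_block qform0 mul0mx trmx0 map_mx0 mulmx0 !mxE.
  rewrite conjC1 mulr1 mul1r mul0r mulr0 !addr0; apply.
  by rewrite row_mx_eq0 negb_and oner_eq0.
split=> // y y_neq0; have g_neq0 : g != 0.
  by apply: contraTneq g_pos => ->; rewrite raddf0 ltxx.
pose u := - (g^-1 * (y *m c) 0 0).
have := G_pos (row_mx u%:M y); rewrite qform_block qformB qformZ qform_rank1.
have -> : u * g * u^* + (y *m c) 0 0 * u^* = 0.
  by rewrite -mulrDl /u mulNr mulrAC mulVf // mul1r addNr mul0r.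
rewrite add0r /u mulNr -mulrA addrC; apply.
by rewrite row_mx_eq0 negb_and y_neq0 orbT.
Qed.

Lemma qform_block_ge0 k (eta : C) (c : 'cV[C]_k) (H : 'M[C]_k) :
  0 <= eta -> (eta = 0 -> c = 0) ->
  (forall y, 0 <= qform (H - eta^-1 *: (c *m c ^t*)) y) ->
  forall x, 0 <= qform (block_mx eta%:M (c ^t*) c H) x.
Proof.
move=> eta_ge0 eta0_c0 schur_ge0 x; rewrite -(hsubmxK x) (mx11_scalar (lsubmx x)).
set a := lsubmx x 0 0; set y := rsubmx x; rewrite qform_block.
set p := (y *m c) 0 0; rewrite -trmxC_mul trmxC11 -/p.
have [eta0|eta_neq0] := eqVneq eta 0.
  have := schur_ge0 y; rewrite /p eta0_c0 // eta0 mul0mx scaler0 subr0 mulmx0 mxE.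
  by rewrite conjC0 !mulr0 mul0r !add0r.
have eta_real : eta^* = eta by apply/CrealP; rewrite ger0_real.
have -> : a * eta * a^* + p * a^* + a * p^* + qform H y =
    eta * ((a + eta^-1 * p) * (a + eta^-1 * p)^*)
    + qform (H - eta^-1 *: (c *m c ^t*)) y.
  rewrite qformB qformZ qform_rank1 -/p -trmxC_mul trmxC11 -/p.
  by rewrite rmorphD rmorphM fmorphV /= eta_real; field.
by rewrite addr_ge0 ?schur_ge0 // mulr_ge0 ?mul_conjC_ge0.
Qed.

Lemma real_gt0_of_mul_Re_gt0 (eta g t : C) : eta \is Num.real ->
  0 < 'Re g -> 0 < 'Re t -> eta = g * t -> 0 < eta.
Proof.
move=> eta_real g_pos t_pos eta_eq; have g_neq0 : g != 0.
  by apply: contraTneq g_pos => ->; rewrite raddf0 ltxx.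
move: t_pos; rewrite -[t](mulKf g_neq0) -eta_eq ReMr // ReV.
by rewrite pmulr_rgt0 // divr_gt0 // exprn_gt0 // normr_gt0.
Qed.

Lemma schur_complement_mulmx k (eta g t : C) (c gc : 'cV[C]_k) (gr r : 'rV[C]_k)
    (H G T : 'M[C]_k) : g != 0 ->
  block_mx eta%:M (c ^t*) c H = block_mx g%:M gr gc G *m block_mx t%:M r 0 T ->
  [/\ eta = g * t, c = t *: gc &
      H - eta^-1 *: (c *m c ^t*) = (G - g^-1 *: (gc *m gr)) *m T].
Proof.
move=> g_neq0; rewrite mulmx_block !mulmx0 !addr0 -scalar_mxM !mul_scalar_mx.
rewrite !mul_mx_scalar; case/eq_block_mx => /(congr1 (fun M : 'M_1 => M 0 0)).
rewrite !mxE eqxx !mulr1n => eta_eq ct_eq c_eq H_eq; split=> //.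
have -> : eta^-1 *: (c *m c ^t*) = g^-1 *: (gc *m c ^t*).
  have [t0|t_neq0] := eqVneq t 0.
    by rewrite c_eq t0 scale0r mul0mx trmx0 map_mx0 !mulmx0 !scaler0.
  by rewrite {1}c_eq -scalemxAl scalerA eta_eq invfM mulfVK.
rewrite H_eq ct_eq mulmxDr -!scalemxAr scalerDr scalerA mulVf // scale1r.
by rewrite mulmxBl -scalemxAl mulmxA opprD addrACA subrr add0r addrC.
Qed.

Lemma qform_ge0_of_trig_factor n (T : 'M[C]_n) : is_trig_mx T^T ->
  (forall i, T i i = 0 \/ 0 < 'Re (T i i)) ->
  forall H G, H ^t* = H -> Re_posdef G -> H = G *m T -> forall x, 0 <= qform H x.
Proof.
move=> trigT; rewrite -[T]trmxK; move: T^T trigT => L trigL {T}.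
elim/trigsqmx_ind: n L / trigL => [|k tau c L _ IH] Tdiag H G.
  by move=> _ _ _ x; rewrite /qform mxE big_ord0.
rewrite tr_block_mx trmx0 [tau]mx11_scalar tr_scalar_mx in Tdiag *.
have t_ok := Tdiag (lshift k 0); rewrite block_mxEul mxE eqxx mulr1n in t_ok.
have L_ok i : L^T i i = 0 \/ 0 < 'Re (L^T i i).
  by have := Tdiag (rshift 1 i); rewrite block_mxEdr.
rewrite -[H]corner_submxK -[G]corner_submxK.
move=> /hermitian_block [eta_real -> H_herm] /Re_posdef_block [g_pos schurG_pos].
have g_neq0 : G 0 0 != 0 by apply: contraTneq g_pos => ->; rewrite raddf0 ltxx.
case/(schur_complement_mulmx g_neq0) => eta_eq c_eq schur_eq.
apply: qform_block_ge0.
- case: t_ok => [t0|t_pos]; first by rewrite eta_eq t0 mulr0.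
  by rewrite ltW // (real_gt0_of_mul_Re_gt0 _ g_pos t_pos eta_eq) // CrealE eta_real.
- move=> eta0; move/eqP: eta_eq; rewrite eq_sym eta0 mulf_eq0 (negPf g_neq0) /=.
  by move=> /eqP t0; rewrite c_eq t0 scale0r.
apply: IH schur_eq => //.
by rewrite raddfB /= linearZ /= map_mxB map_mxZ trmxC_mul trmxCK H_herm fmorphV /= eta_real.
Qed.

Lemma unitary_upper_trigonalization n (M : 'M[C]_n) : (0 < n)%N ->
  exists2 S : 'M[C]_n, S \is unitarymx &
    is_trig_mx (S ^t* *m M *m S)^T /\ forall i, eigenvalue M ((S ^t* *m M *m S) i i).
Proof.
move=> n_gt0; have [P P_unitary] := Schur M^T n_gt0.
rewrite /similar_to conjymx // => L_trig; set L := P *m M^T *m P ^t* in L_trig.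
have L_eq : (P^T ^t* *m M *m P^T)^T = L by rewrite !trmx_mul trmxK map_trmx mulmxA.
exists P^T; first by rewrite trmx_unitary.
rewrite L_eq; split=> // i; rewrite -eigenvalue_trmx.
have -> : (P^T ^t* *m M *m P^T) i i = L i i by rewrite -L_eq [RHS]mxE.
have L_eig : eigenvalue L (L i i).
  rewrite eigenvalue_root_char char_poly_trig // /root horner_prod (bigD1 i) //=.
  by rewrite hornerXsubC subrr mul0r.
have P_unit := unitarymx_unit P_unitary.
by apply: (eigenvalue_conjmx (stablemx_unit _ P_unit)); rewrite ?row_free_unit ?conjymx.
Qed.

Lemma Re_posdef_mulmx_eigenvalue n (A B M : 'M[C]_n) x :
  B ^t* = B -> Re_posdef A -> A *m M = B -> qform B x < 0 ->
  exists2 z, eigenvalue M z & ('Re z <= 0) && (z != 0).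
Proof.
move=> B_herm A_pos AM Bx_lt0; have n_gt0 : (0 < n)%N.
  rewrite lt0n; apply: contraTneq Bx_lt0 => n0; subst n.
  by rewrite /qform mxE big_ord0 ltxx.
have [S S_unitary [T_trig T_eig]] := unitary_upper_trigonalization M n_gt0.
set T := S ^t* *m M *m S in T_trig T_eig.
have [i T_ii | T_ok] := pickP (fun i => ('Re (T i i) <= 0) && (T i i != 0)).
  by exists (T i i).
have T_diag i : T i i = 0 \/ 0 < 'Re (T i i).
  have := T_ok i; have [-> _|_] := eqVneq (T i i) 0; [by left | rewrite andbT].
  by move/negbT; rewrite -real_ltNge ?Creal_Re //; right.
have SSt : S *m S ^t* = 1%:M by apply/unitarymxP.
have H_herm : (S ^t* *m B *m S) ^t* = S ^t* *m B *m S.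
  by rewrite !trmxC_mul trmxCK B_herm mulmxA.
have HGT : S ^t* *m B *m S = (S ^t* *m A *m S) *m T.
  by rewrite /T !mulmxA -[_ *m S *m S ^t*]mulmxA SSt mulmx1 -[_ *m A *m M]mulmxA AM.
have G_pos := Re_posdef_congr (unitarymx_unit S_unitary) A_pos.
have := qform_ge0_of_trig_factor T_trig T_diag H_herm G_pos HGT (x *m S).
by rewrite qform_congr -mulmxA SSt mulmx1 => /le_gtF; rewrite Bx_lt0.
Qed.

Lemma Re_norm_le (z : C) r : `|z| <= r -> - r <= 'Re z <= r.
Proof.
move=> z_le; rewrite -real_ler_norml ?Creal_Re // (le_trans _ z_le) //.
by case: (leif_normC_Re_Creal z).
Qed.

Lemma spectral_diag_eigenvalue n (A : 'M[C]_n) i : A \is normalmx ->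
  eigenvalue A (spectral_diag A 0 i).
Proof.
move=> /orthomx_spectralP; set P := spectralmx A => A_eq.
have P_unitary : P \is unitarymx by exact: spectral_unitarymx.
apply/eigenvalueP; exists (row i P).
  rewrite -row_mul {1}A_eq invmx_unitary // !mulmxA (unitarymxP P_unitary) mul1mx.
  by rewrite mul_diag_mx; apply/rowP => j; rewrite !mxE.
have := row_unitarymxP P_unitary i i; rewrite eqxx; apply: contra_eq_neq => ->.
by rewrite dotmxE mul0mx mxE eq_sym oner_eq0.
Qed.

Lemma hermitian_qform_bound n (A : 'M[C]_n) r : A ^t* = A ->
  (forall a, eigenvalue A a -> `|a| <= r) -> forall x, `|qform A x| <= r * qform 1%:M x.
Proof.
move=> A_herm eig_le x; have A_normal : A \is normalmx.
  by apply/normalmxP; rewrite A_herm.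
have := orthomx_spectralP A_normal; set P := spectralmx A.
have P_unitary : P \is unitarymx by exact: spectral_unitarymx.
rewrite invmx_unitary // => A_eq.
have -> : qform 1%:M x = qform 1%:M (x *m P ^t*).
  by rewrite -qform_congr mulmx1 -invmx_unitary // mulVmx // unitarymx_unit.
rewrite [in X in `|X|]A_eq qform_congr qform_diag qform1 dotmxE mxE mulr_sumr.
apply: le_trans (ler_norm_sum _ _ _) _; apply: ler_sum => i _.
rewrite !mxE normrM (ger0_norm (mul_conjC_ge0 _)) ler_wpM2r ?mul_conjC_ge0 //.
exact/eig_le/spectral_diag_eigenvalue.
Qed.

Section BlockForms.
Variables (p : nat) (ns : 'I_p -> nat).
Local Notation n := (\sum_(s < p) ns s).

Lemma qform_block_diag_part (A : 'M[C]_n) x :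
  qform (block_diag_part A) x = \sum_s qform A (row_block_part s x).
Proof.
rewrite qformE; under [RHS]eq_bigr do rewrite qformE.
rewrite [RHS]exchange_big; apply: eq_bigr => i _.
rewrite [RHS]exchange_big; apply: eq_bigr => j _.
rewrite [RHS](bigD1 (tagnat.sig1 i)) //= [X in _ + X]big1 => [|s /negPf si]; last first.
  by rewrite !mxE eq_sym si !mul0r.
rewrite addr0 block_diag_partE !mxE eqxx eq_sym; case: eqP => // _.
by rewrite mulr0 mul0r conjC0 mulr0.
Qed.

Lemma qform_block_diag_part_bound (A : 'M[C]_n) r :
  (forall y, `|qform A y| <= r * qform 1%:M y) ->
  forall x, `|qform (block_diag_part A) x| <= r * qform 1%:M x.
Proof.
move=> A_bound x; rewrite -block_diag_part1 !qform_block_diag_part mulr_sumr.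
by apply: le_trans (ler_norm_sum _ _ _) _; apply: ler_sum => s _.
Qed.

Lemma block_strict_lower_addC (A : 'M[C]_n) : A ^t* = A ->
  block_strict_lower A + (block_strict_lower A) ^t* = A - block_diag_part A.
Proof.
move=> A_herm; apply/matrixP => i j.
rewrite [LHS]mxE [RHS]mxE [X in _ + X]mxE [X in _ + X^*]mxE [X in _ = _ + X]mxE.
rewrite !block_strict_lowerE block_diag_partE -val_eqE /=.
have A_ji : (A j i)^* = A i j by rewrite -[in RHS]A_herm !mxE.
by case: ltngtP => _; rewrite ?A_ji ?conjC0 ?subr0 ?subrr ?addr0 ?add0r.
Qed.

Lemma Re_posdef_block_strict_lower (A : 'M[C]_n) r beta : A ^t* = A ->
  (forall a, eigenvalue A a -> `|a| <= r) -> 0 <= beta -> beta * r < 1 ->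
  Re_posdef (1%:M + beta *: block_strict_lower A).
Proof.
move=> A_herm eig_le beta_ge0 beta_r_lt1 x x_neq0.
have A_bound := hermitian_qform_bound A_herm eig_le.
have D_bound := qform_block_diag_part_bound A_bound.
set q := qform 1%:M x; have q_gt0 : 0 < q := qform1_gt0 x_neq0.
set z := qform (block_strict_lower A) x.
have Re_z : - (r * q) <= 'Re z.
  have Re_z2 : 'Re z *+ 2 = 'Re (qform A x) - 'Re (qform (block_diag_part A) x).
    rewrite -raddfB -qformB -block_strict_lower_addC // qformD -conj_qform.
    by rewrite raddfD /= Re_conj mulr2n.
  have /andP [ReA_ge _] := Re_norm_le (A_bound x).
  have /andP [_ ReD_le] := Re_norm_le (D_bound x).
  by rewrite -(ler_pMn2r (isT : (0 < 2)%N)) Re_z2 mulr2n lerB.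
rewrite qformD qformZ raddfD /= -/q -/z (Creal_ReP q (gtr0_real q_gt0)).
rewrite ReMl ?ger0_real //; apply: lt_le_trans (_ : 0 < q - beta * (r * q)) _.
  by rewrite mulrA -{1}[q]mul1r -mulrBl pmulr_lgt0 // subr_gt0.
by rewrite lerD2l -mulrN ler_wpM2l.
Qed.

End BlockForms.

End HermitianForm.

Section RealMatrices.
Variable R : rcfType.
Local Notation toC := (real_complex R).

Lemma cmxE m n (A : 'M[R]_(m, n)) : cmx A = map_mx toC A.
Proof. by apply/matrixP => i j; rewrite !mxE. Qed.

Lemma cmx_trC m n (A : 'M[R]_(m, n)) : cmx A ^t* = cmx A^T.
Proof. by apply/matrixP => i j; rewrite !mxE conj_Creal // complex_real. Qed.

Lemma spectral_radius_eigenvalue_le n (B : 'M[R]_n) rho : is_spectral_radius B rho ->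
  forall z, eigenvalue (cmx B) z -> `|z| <= toC rho.
Proof. by move=> [_ rho_max] [a b] ab_eig; rewrite normc_def lecR rho_max. Qed.

End RealMatrices.

Theorem lemma14 (R : rcfType) (p : nat) (ns : 'I_p -> nat)
    (ns_pos : forall s, (0 < ns s)%N)
    (B : 'M[R]_(\sum_(s < p) ns s))
    (Bsym : B^T = B)
    (lmin : R) (Hlmin : is_lambda_min B lmin) (Hneg : lmin < 0)
    (rho : R) (Hrho : is_spectral_radius B rho)
    (beta : R) (Hbeta0 : 0 < beta) (Hbeta1 : beta < rho^-1) :
  exists a b : R,
    ceigen (invmx (1%:M + beta *: block_strict_lower B) *m B) a b /\
    a <= 0 /\ (a, b) != (0, 0).
Proof.
have beta_rho_lt1 : beta * rho < 1.
  have [rho_le0|rho_gt0] := lerP rho 0; last by rewrite -ltr_pdivlMr // mul1r.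
  by rewrite (le_lt_trans _ ltr01) // pmulr_rle0.
set A := 1%:M + beta *: block_strict_lower B.
have B_herm : cmx B ^t* = cmx B by rewrite cmx_trC Bsym.
have A_pos : Re_posdef (cmx A).
  rewrite cmxE map_mxD map_mxZ map_mx1 map_block_strict_lower -cmxE.
  apply: Re_posdef_block_strict_lower (spectral_radius_eigenvalue_le Hrho) _ _ => //.
    by rewrite lecR ltW.
  by rewrite -rmorphM -(rmorph1 (real_complex R)) ltcR.
have AM : cmx A *m cmx (invmx A *m B) = cmx B.
  by rewrite !cmxE map_mxM map_invmx mulmxA mulmxV ?mul1mx // -cmxE Re_posdef_unitmx.
have [w wB w_neq0] := eigenvalueP (proj1 Hlmin).
have Bw_lt0 : qform (cmx B) (cmx w) < 0.
  rewrite (@qform_eigenvector _ _ _ (real_complex R lmin)); last first.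
    by rewrite !cmxE -map_mxM wB map_mxZ.
  by rewrite pmulr_llt0 ?qform1_gt0 ?cmxE ?map_mx_eq0 // -(rmorph0 (real_complex R)) ltcR.
have [[a b] ab_eig /andP [a_le0 ab_neq0]] :=
  Re_posdef_mulmx_eigenvalue B_herm A_pos AM Bw_lt0.
exists a, b; split=> //; split; first by move: a_le0; rewrite -complexRe lecE => /andP [].
by apply: contra ab_neq0; rewrite xpair_eqE => /andP [/eqP -> /eqP ->].
Qed.
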